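(* Let $1\le p\le\frac{\log 3}{\log 2}$ and let $\epsilon_1,\epsilon_2,\epsilon_3$ be acute angles with $\epsilon_1+\epsilon_2+\epsilon_3=\frac{\pi}{2}$. Then $\sum_{i=1}^3\sin^p\epsilon_i\ge 1$. *)

From Stdlib Require Import Reals.

From Stdlib Require Import Reals Lra.
Open Scope R_scope.

(* Since [0 < sin e_i < 1] and [s^p] decreases in [p], it suffices to take
   [p = p_crit = log2 3].  The sines [x, y, z] satisfy
   [x^2 + y^2 + z^2 + 2xyz = 1], and [x = y = z = 1/2] is an equality case.
   If two of [x, y, z] are at most [0.29], the tangent line of [s^p_crit] at
   [1] and the bound [s^p_crit >= p_crit s^2] for small [s] suffice.
   Otherwise [x + y + z >= 1.24]; write [x + y + z = 1 + 2t - 2t^2].  For a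
   cubic minorant [L] of [s^p_crit], [L x + L y + L z] is then affine in [xyz]
   and smallest when [xyz] is largest, namely at [(t, t, 1 - 2t^2)].  Three
   cubics, for three ranges of [t], reduce the claim to one-variable polynomial
   inequalities, certified in Bernstein form.  The minorants come from
   Bernoulli's inequality for the exponent [r_crit = 2 - p_crit], which is
   pinned between two nearby rationals. *)

(* A polynomial in [s] that is a nonnegative combination of the Bernstein
   basis [(s - a)^i * (b - s)^(n - i)] is nonnegative on [[a, b]]; [lra] finds
   the combination. *)
Ltac bernstein s a b n :=
  let rec hints i :=
    lazymatch i with
    | O => assert (0 <= (b - s) ^ n) by (apply pow_le; lra)
    | S ?k =>
        let j := eval cbv in (n - i)%nat in
        assert (0 <= (s - a) ^ i * (b - s) ^ j)
          by (apply Rmult_le_pos; apply pow_le; lra);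
        hints k
    end in
  hints n; lra.

Ltac bernstein_split s a m b n :=
  destruct (Rle_dec s m); [bernstein s a m n | bernstein s m b n].

Lemma affine_nonneg_between (a b r A B : R) :
  a <= r <= b -> 0 <= A + a * B -> 0 <= A + b * B -> 0 <= A + r * B.
Proof.
  intros hr ha hb.
  assert (0 <= (r - a) * (A + b * B)) by (apply Rmult_le_pos; lra).
  assert (0 <= (b - r) * (A + a * B)) by (apply Rmult_le_pos; lra).
  destruct (Req_dec a b) as [<-|]; [replace r with a by lra; lra | nra].
Qed.

(* [exp u >= 1 + u] at [u = (1 - w) ln a] and [u = - w ln a], weighted by
   [w] and [1 - w]. *)
Lemma Rpower_le_bernoulli (a w : R) :
  0 < a -> 0 <= w <= 1 -> Rpower a w <= 1 + w * (a - 1).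
Proof.
  intros ha hw; unfold Rpower.
  set (l := ln a); set (m := exp (w * l)).
  assert (hm : 0 < m) by apply exp_pos.
  assert (hup : exp ((1 - w) * l) * m = a).
  { unfold m; rewrite <- exp_plus, <- (exp_ln a ha); f_equal; unfold l; ring. }
  assert (hdown : exp (- (w * l)) * m = 1).
  { unfold m; rewrite <- exp_plus, <- exp_0; f_equal; ring. }
  pose proof (exp_ineq1_le ((1 - w) * l)).
  pose proof (exp_ineq1_le (- (w * l))).
  assert (1 <= w * exp ((1 - w) * l) + (1 - w) * exp (- (w * l))) by nra.
  nra.
Qed.

Lemma Rpower_ge_bernoulli (x q : R) :
  0 < x -> 1 <= q -> 1 + q * (x - 1) <= Rpower x q.
Proof.
  intros hx hq.
  assert (hpos : 0 < Rpower x q) by apply exp_pos.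
  assert (hroot : Rpower (Rpower x q) (/ q) = x).
  { rewrite Rpower_mult, Rinv_r by lra; apply Rpower_1, hx. }
  pose proof (Rpower_le_bernoulli (Rpower x q) (/ q) hpos) as hb.
  rewrite hroot in hb.
  assert (0 < / q <= 1).
  { split; [apply Rinv_0_lt_compat; lra|].
    rewrite <- Rinv_1; apply Rinv_le_contravar; lra. }
  specialize (hb ltac:(lra)).
  apply (Rmult_le_compat_l q) in hb; [|lra].
  rewrite Rmult_plus_distr_l, <- Rmult_assoc, Rinv_r in hb by lra.
  lra.
Qed.

Lemma Rle_Rpower_base_lt_1 (s p q : R) :
  0 < s < 1 -> p <= q -> Rpower s q <= Rpower s p.
Proof.
  intros hs hpq; unfold Rpower.
  assert (ln s < 0) by (rewrite <- ln_1; apply ln_increasing; lra).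
  destruct (Req_dec p q) as [->|]; [lra|].
  left; apply exp_increasing; nra.
Qed.

Lemma Rpower_1_l (x : R) : Rpower 1 x = 1.
Proof. unfold Rpower; rewrite ln_1, Rmult_0_r; apply exp_0. Qed.

Lemma Rpower_lt_reg_l (b x y : R) : 1 < b -> Rpower b x < Rpower b y -> x < y.
Proof.
  intros hb hlt; destruct (Rlt_le_dec x y) as [|hyx]; [assumption|].
  pose proof (Rle_Rpower b y x ltac:(lra) hyx); lra.
Qed.

Lemma Rpower_pow_r (b u : R) (n : nat) : 0 < b -> Rpower b u ^ n = Rpower b (u * INR n).
Proof. intros hb; rewrite <- Rpower_mult, Rpower_pow; [reflexivity | apply exp_pos]. Qed.

Definition p_crit : R := Rlog 2 3.
Definition r_crit : R := 2 - p_crit.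

Lemma Rpower_2_p_crit : Rpower 2 p_crit = 3.
Proof. apply Rpower_Rlog; lra. Qed.

Lemma Rpower_2_r_crit : Rpower 2 r_crit = 4/3.
Proof.
  unfold r_crit, Rminus.
  rewrite Rpower_plus, Rpower_Ropp, Rpower_2_p_crit.
  replace 2 with (INR 2) at 2 by (simpl; ring).
  rewrite Rpower_pow by lra; simpl; field.
Qed.

Lemma Rpower_4_r_crit : Rpower 4 r_crit = 16/9.
Proof.
  replace 4 with (2 * 2) by ring.
  rewrite <- Rpower_mult_distr, Rpower_2_r_crit by lra; field.
Qed.

Lemma r_crit_bounds : 127/306 < r_crit < 22/53.
Proof.
  assert (h2 : 1 < 2) by lra.
  assert (hlo : Rpower 2 (INR 127) < Rpower 2 (r_crit * INR 306)).
  { rewrite <- Rpower_pow_r, Rpower_pow, Rpower_2_r_crit by lra; lra. }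
  assert (hhi : Rpower 2 (r_crit * INR 53) < Rpower 2 (INR 22)).
  { rewrite <- Rpower_pow_r, Rpower_pow, Rpower_2_r_crit by lra; lra. }
  apply Rpower_lt_reg_l in hlo, hhi; try exact h2.
  rewrite !INR_IZR_INZ in hlo, hhi; simpl in hlo, hhi; lra.
Qed.

(* Bernoulli's inequality for [(c s)^r_crit], tight at [s = 1/c], together with
   [s^p_crit * s^r_crit = s^2]. *)
Lemma Rpower_p_crit_anchor (s c : R) : 0 < s < 1 -> 0 < c ->
  Rpower c r_crit * s ^ 2 <= Rpower s p_crit * (1 + r_crit * (c * s - 1)).
Proof.
  intros hs hc; pose proof r_crit_bounds.
  assert (hsq : Rpower s p_crit * Rpower s r_crit = s ^ 2).
  { rewrite <- Rpower_plus, <- Rpower_pow by lra; f_equal; unfold r_crit; simpl; ring. }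
  assert (hcs : Rpower c r_crit * Rpower s r_crit = Rpower (c * s) r_crit)
    by (apply Rpower_mult_distr; lra).
  assert (Rpower (c * s) r_crit <= 1 + r_crit * (c * s - 1))
    by (apply Rpower_le_bernoulli; nra).
  assert (0 < Rpower s p_crit) by apply exp_pos.
  rewrite <- hsq.
  replace (Rpower c r_crit * (Rpower s p_crit * Rpower s r_crit))
    with (Rpower s p_crit * Rpower (c * s) r_crit) by (rewrite <- hcs; ring).
  apply Rmult_le_compat_l; lra.
Qed.

Lemma Rpower_p_crit_lower (s c L : R) : 0 < s < 1 -> 0 < c ->
  L * (1 + r_crit * (c * s - 1)) <= Rpower c r_crit * s ^ 2 ->
  L <= Rpower s p_crit.
Proof.
  intros hs hc hL; pose proof r_crit_bounds.
  assert (0 < c * s) by (apply Rmult_lt_0_compat; lra).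
  assert (hd : 0 < 1 + r_crit * (c * s - 1)) by nra.
  apply (Rmult_le_reg_r _ _ _ hd).
  pose proof (Rpower_p_crit_anchor s c hs hc); lra.
Qed.

Lemma Rpower_p_crit_lower_endpoints (s c L : R) : 0 < s < 1 -> 0 < c ->
  L * (1 + 127/306 * (c * s - 1)) <= Rpower c r_crit * s ^ 2 ->
  L * (1 + 22/53 * (c * s - 1)) <= Rpower c r_crit * s ^ 2 ->
  L <= Rpower s p_crit.
Proof.
  intros hs hc hlo hhi; apply (Rpower_p_crit_lower s c); [exact hs | exact hc |].
  pose proof (affine_nonneg_between (127/306) (22/53) r_crit
    (Rpower c r_crit * s ^ 2 - L) (- L * (c * s - 1))).
  pose proof r_crit_bounds; lra.
Qed.

Definition cubic (a0 a1 a2 a3 s : R) : R := a0 + a1 * s + a2 * s ^ 2 + a3 * s ^ 3.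

(* [minorant_A] and [minorant_B] were fitted numerically. *)
Definition minorant_A : R -> R :=
  cubic (-185/10000) (3265/10000) (7618/10000) (-714/10000).

Definition minorant_B : R -> R :=
  cubic (-846/10000) (6751/10000) (2130/10000) (1952/10000).

Lemma minorant_A_le_Rpower (s : R) : 0 < s < 1 -> minorant_A s <= Rpower s p_crit.
Proof.
  intros hs; unfold minorant_A, cubic.
  destruct (Rle_dec s (7/20)); [|destruct (Rle_dec s (141/200))].
  - apply (Rpower_p_crit_lower_endpoints s 4); try lra; rewrite Rpower_4_r_crit;
      bernstein_split s 0 (7/40) (7/20) 4%nat.
  - apply (Rpower_p_crit_lower_endpoints s 2); try lra; rewrite Rpower_2_r_crit;
      bernstein s (7/20) (141/200) 4%nat.
  - apply (Rpower_p_crit_lower_endpoints s 1); try lra; rewrite Rpower_1_l;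
      bernstein s (141/200) 1 4%nat.
Qed.

Lemma minorant_B_le_Rpower (s : R) : 0 < s < 1 -> minorant_B s <= Rpower s p_crit.
Proof.
  intros hs; unfold minorant_B, cubic.
  destruct (Rle_dec s (7/20)); [|destruct (Rle_dec s (141/200))].
  - apply (Rpower_p_crit_lower_endpoints s 4); try lra; rewrite Rpower_4_r_crit;
      bernstein s 0 (7/20) 4%nat.
  - apply (Rpower_p_crit_lower_endpoints s 2); try lra; rewrite Rpower_2_r_crit;
      bernstein_split s (7/20) (211/400) (141/200) 4%nat.
  - apply (Rpower_p_crit_lower_endpoints s 1); try lra; rewrite Rpower_1_l;
      bernstein s (141/200) 1 4%nat.
Qed.

Lemma minorant_A_branch (t : R) : 139/1000 <= t <= 34/100 ->
  1 <= minorant_A (1 - 2 * t ^ 2) + 2 * minorant_A t.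
Proof. intros; unfold minorant_A, cubic; bernstein t (139/1000) (34/100) 6%nat. Qed.

Lemma minorant_B_branch (t : R) : 34/100 <= t <= 37/100 ->
  1 <= minorant_B (1 - 2 * t ^ 2) + 2 * minorant_B t.
Proof. intros; unfold minorant_B, cubic; bernstein t (34/100) (37/100) 6%nat. Qed.

Definition kappa : R := (31/53) ^ 2.

Definition minorant_C (s : R) : R :=
  let u := 2 * s - 1 in
  (1 + (2 - r_crit) * u + kappa * u ^ 2 - kappa * r_crit * u ^ 3) / 3.

Lemma minorant_C_cubic (s : R) :
  minorant_C s =
  cubic ((1 - (2 - r_crit) + kappa + kappa * r_crit) / 3)
        ((2 * (2 - r_crit) - 4 * kappa - 6 * kappa * r_crit) / 3)
        ((4 * kappa + 12 * kappa * r_crit) / 3)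
        (- 8 * kappa * r_crit / 3) s.
Proof. unfold minorant_C, cubic; field. Qed.

(* With [u = 2s - 1]: [(1 + u)^2 - 3 (minorant_C s) (1 + r_crit u)
   = ((1 - r_crit)^2 - kappa) u^2 + kappa r_crit^2 u^4 >= 0]. *)
Lemma minorant_C_le_Rpower (s : R) : 0 < s < 1 -> minorant_C s <= Rpower s p_crit.
Proof.
  intros hs; pose proof r_crit_bounds.
  apply (Rpower_p_crit_lower s 2); [exact hs | lra |].
  rewrite Rpower_2_r_crit; unfold minorant_C, kappa.
  set (u := 2 * s - 1).
  replace (4/3 * s ^ 2) with ((1 + u) ^ 2 / 3) by (unfold u; field).
  assert (0 <= ((1 - r_crit) ^ 2 - (31/53) ^ 2) * u ^ 2) by (apply Rmult_le_pos; nra).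
  assert (0 <= (31/53) ^ 2 * r_crit ^ 2 * u ^ 4) by (apply Rmult_le_pos; nra).
  nra.
Qed.

(* [3 (minorant_C (1 - 2t^2) + 2 minorant_C t - 1) = (1 - 2t)^2 Q]: the
   double root at [t = 1/2] is the equality case [x = y = z = 1/2]. *)
Lemma minorant_C_branch (t : R) : 37/100 <= t <= 1/2 ->
  1 <= minorant_C (1 - 2 * t ^ 2) + 2 * minorant_C t.
Proof.
  intros ht; pose proof r_crit_bounds.
  set (Q := kappa * ((1 + 2 * t) ^ 2 + 2) - 2
            + r_crit * (1 - kappa * (1 - 2 * t) * ((1 + 2 * t) ^ 3 - 2))).
  assert (hQ : 0 <= Q).
  { unfold Q, kappa; apply affine_nonneg_between with (127/306) (22/53); [lra | |];
      bernstein t (37/100) (1/2) 4%nat. }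
  assert (0 <= (1 - 2 * t) ^ 2 * Q) by (apply Rmult_le_pos; [apply pow2_ge_0 | exact hQ]).
  unfold minorant_C, Q in *; lra.
Qed.

Lemma Rpower_p_crit_ge_tangent (x : R) : 0 < x -> 1 + p_crit * (x - 1) <= Rpower x p_crit.
Proof.
  intros hx; apply Rpower_ge_bernoulli; [exact hx|].
  pose proof r_crit_bounds; unfold r_crit in *; lra.
Qed.

Lemma Rpower_p_crit_ge_small (y : R) : 0 < y <= 29/100 -> p_crit * y ^ 2 <= Rpower y p_crit.
Proof.
  intros hy; pose proof r_crit_bounds.
  apply (Rpower_p_crit_lower y 2); [lra | lra |].
  rewrite Rpower_2_r_crit.
  replace p_crit with (2 - r_crit) by (unfold r_crit; ring).
  assert (0 <= y ^ 2) by apply pow2_ge_0.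
  assert (0 <= r_crit * (2 - r_crit) * (29/100 - y))
    by (apply Rmult_le_pos; [apply Rmult_le_pos|]; lra).
  assert ((2 - r_crit) * (1 + r_crit * (2 * y - 1)) <= 4/3) by nra.
  nra.
Qed.

Lemma sum_parametrization (p : R) :
  1 <= p <= 3/2 -> exists t, 0 <= t <= 1/2 /\ p = 1 + 2 * t - 2 * t ^ 2.
Proof.
  intros hp; set (s := sqrt (3 - 2 * p)).
  assert (hs : s * s = 3 - 2 * p) by (apply sqrt_sqrt; lra).
  assert (0 <= s) by apply sqrt_pos.
  exists ((1 - s) / 2); split; [split|]; nra.
Qed.

Section TripleRelation.

Variables x y z : R.
Hypotheses (hx : 0 < x < 1) (hy : 0 < y < 1) (hz : 0 < z < 1)
  (hxyz : x ^ 2 + y ^ 2 + z ^ 2 + 2 * x * y * z = 1).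

Lemma triple_sum_le_3_2 : x + y + z <= 3/2.
Proof.
  assert (hzxy : (z + x * y) ^ 2 = (1 - x ^ 2) * (1 - y ^ 2)) by nra.
  assert (z + x * y <= 1 - x * y).
  { assert ((1 - x * y) ^ 2 - (z + x * y) ^ 2 = (x - y) ^ 2) by (rewrite hzxy; ring).
    assert (0 <= (x - y) ^ 2) by apply pow2_ge_0.
    nra. }
  assert ((x + y) ^ 2 <= 2 * (1 - z)) by nra.
  assert (0 <= (z - 1/2) ^ 2) by apply pow2_ge_0.
  nra.
Qed.

Lemma triple_one_sub_le_sum_sq : 1 - x <= y ^ 2 + z ^ 2.
Proof.
  assert (0 <= x * (y - z) ^ 2) by (apply Rmult_le_pos; [lra | apply pow2_ge_0]).
  apply (Rmult_le_reg_r (1 + x)); nra.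
Qed.

Lemma triple_sum_ge_of_two_large :
  29/100 <= x -> 29/100 <= y -> 124/100 <= x + y + z.
Proof.
  intros hx' hy'.
  destruct (Rle_dec (124/100) (x + y)) as [|hs]; [lra|].
  set (s := x + y) in *; set (m := x * y).
  assert (hm : 29/100 * s - 841/10000 <= m) by (unfold m, s; nra).
  assert (hzm : (z + m) ^ 2 = (1 + m) ^ 2 - s ^ 2) by (unfold m, s; nra).
  assert (0 < 124/100 - s + m) by (unfold m; nra).
  assert (0 <= m * (s - 24/100) - (s - 28/100) * (s - 96/100)).
  { assert (58/100 <= s) by (unfold s; lra).
    assert ((29/100 * s - 841/10000) * (s - 24/100) <= m * (s - 24/100))
      by (apply Rmult_le_compat_r; lra).
    nra. }
  assert ((z + m) ^ 2 - (124/100 - s + m) ^ 2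
          = 2 * (m * (s - 24/100) - (s - 28/100) * (s - 96/100)))
    by (rewrite hzm; field).
  assert (0 <= z + m) by (unfold m; nra).
  nra.
Qed.

(* Once [x + y + z] is fixed, the relation fixes [xy + yz + zx] as a function
   of [w = xyz], and the discriminant of the cubic with roots [x, y, z]
   factors as [-4 (w - w1) (w - w2) (w - w3)] with [w3 < 0] and [w2 <= w1];
   [w1] comes from the double root [(t, t, 1 - 2t^2)]. *)
Lemma triple_prod_le (t : R) : 0 <= t <= 1/2 -> x + y + z = 1 + 2 * t - 2 * t ^ 2 ->
  x * y * z <= t ^ 2 * (1 - 2 * t ^ 2).
Proof.
  intros ht hp.
  assert (he : x * y + y * z + z * x = ((x + y + z) ^ 2 - 1 + 2 * (x * y * z)) / 2)
    by lra.
  assert (hdisc : ((x - y) * (y - z) * (z - x)) ^ 2 =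
     -4 * (x * y * z - t ^ 2 * (1 - 2 * t ^ 2))
        * (x * y * z - (1 - t) ^ 2 * (1 - 2 * (1 - t) ^ 2))
        * (x * y * z + (1 + t - t ^ 2) ^ 2)).
  { transitivity ((x + y + z) ^ 2 * (x * y + y * z + z * x) ^ 2
      - 4 * (x * y + y * z + z * x) ^ 3 - 4 * (x + y + z) ^ 3 * (x * y * z)
      + 18 * (x + y + z) * (x * y + y * z + z * x) * (x * y * z)
      - 27 * (x * y * z) ^ 2); [ring|].
    rewrite he, hp; generalize (x * y * z); intros w; field. }
  assert (0 <= ((x - y) * (y - z) * (z - x)) ^ 2) by apply pow2_ge_0.
  assert (0 < x * y * z) by (repeat apply Rmult_lt_0_compat; lra).
  assert (0 <= (1 - 2 * t) ^ 3) by (apply pow_le; lra).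
  assert (0 < (1 + t - t ^ 2) ^ 2) by (apply pow_lt; nra).
  destruct (Rle_dec (x * y * z) (t ^ 2 * (1 - 2 * t ^ 2))) as [|hgt]; [assumption|].
  assert (0 < (x * y * z - t ^ 2 * (1 - 2 * t ^ 2))
              * (x * y * z - (1 - t) ^ 2 * (1 - 2 * (1 - t) ^ 2)))
    by (apply Rmult_lt_0_compat; nra).
  nra.
Qed.

Lemma triple_cubic_sum (a0 a1 a2 a3 t : R) : x + y + z = 1 + 2 * t - 2 * t ^ 2 ->
  cubic a0 a1 a2 a3 x + cubic a0 a1 a2 a3 y + cubic a0 a1 a2 a3 z =
  cubic a0 a1 a2 a3 (1 - 2 * t ^ 2) + 2 * cubic a0 a1 a2 a3 t
  + (t ^ 2 * (1 - 2 * t ^ 2) - x * y * z) * (2 * a2 + 3 * a3 * (x + y + z - 1)).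
Proof.
  intros hp.
  assert (h2 : x ^ 2 + y ^ 2 + z ^ 2 = 1 - 2 * (x * y * z)) by lra.
  assert (h3 : x ^ 3 + y ^ 3 + z ^ 3 = 3/2 * (x + y + z) - (x + y + z) ^ 3 / 2
                                      + 3 * (x * y * z) * (1 - (x + y + z))).
  { assert (3/2 * (x + y + z) * (x ^ 2 + y ^ 2 + z ^ 2 + 2 * x * y * z - 1) = 0)
      by (rewrite hxyz; ring).
    lra. }
  unfold cubic.
  transitivity (3 * a0 + a1 * (x + y + z) + a2 * (x ^ 2 + y ^ 2 + z ^ 2)
                + a3 * (x ^ 3 + y ^ 3 + z ^ 3)); [ring|].
  rewrite h2, h3, hp; field.
Qed.

Lemma triple_Rpower_sum_ge_1_of_minorant (a0 a1 a2 a3 t : R) :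
  0 <= t <= 1/2 -> x + y + z = 1 + 2 * t - 2 * t ^ 2 ->
  (forall s, 0 < s < 1 -> cubic a0 a1 a2 a3 s <= Rpower s p_crit) ->
  0 <= 2 * a2 + 3 * a3 * (x + y + z - 1) ->
  1 <= cubic a0 a1 a2 a3 (1 - 2 * t ^ 2) + 2 * cubic a0 a1 a2 a3 t ->
  1 <= Rpower x p_crit + Rpower y p_crit + Rpower z p_crit.
Proof.
  intros ht hp hL hw hbranch.
  pose proof (triple_cubic_sum a0 a1 a2 a3 t hp).
  pose proof (triple_prod_le t ht hp).
  assert (0 <= (t ^ 2 * (1 - 2 * t ^ 2) - x * y * z) * (2 * a2 + 3 * a3 * (x + y + z - 1)))
    by (apply Rmult_le_pos; lra).
  pose proof (hL x hx); pose proof (hL y hy); pose proof (hL z hz).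
  lra.
Qed.

Lemma triple_Rpower_sum_ge_1_of_two_small :
  y <= 29/100 -> z <= 29/100 ->
  1 <= Rpower x p_crit + Rpower y p_crit + Rpower z p_crit.
Proof.
  intros hy' hz'.
  pose proof (Rpower_p_crit_ge_tangent x ltac:(lra)).
  pose proof (Rpower_p_crit_ge_small y ltac:(lra)).
  pose proof (Rpower_p_crit_ge_small z ltac:(lra)).
  pose proof triple_one_sub_le_sum_sq.
  assert (0 <= p_crit * (y ^ 2 + z ^ 2 - (1 - x)))
    by (apply Rmult_le_pos; [pose proof r_crit_bounds; unfold r_crit in *|]; lra).
  lra.
Qed.

Lemma triple_Rpower_sum_ge_1_of_large_sum :
  124/100 <= x + y + z ->
  1 <= Rpower x p_crit + Rpower y p_crit + Rpower z p_crit.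
Proof.
  intros hs; pose proof triple_sum_le_3_2; pose proof r_crit_bounds.
  destruct (sum_parametrization (x + y + z)) as [t [ht hp]]; [lra|].
  assert (139/1000 <= t) by nra.
  destruct (Rle_dec (37/100) t); [|destruct (Rle_dec t (34/100))].
  - eapply (triple_Rpower_sum_ge_1_of_minorant _ _ _ _ t ht hp).
    + intros s hs'; pose proof (minorant_C_le_Rpower s hs') as hC.
      rewrite minorant_C_cubic in hC; exact hC.
    + unfold kappa; nra.
    + rewrite <- !minorant_C_cubic; apply minorant_C_branch; lra.
  - apply (triple_Rpower_sum_ge_1_of_minorant
             (-185/10000) (3265/10000) (7618/10000) (-714/10000) t ht hp).
    + exact minorant_A_le_Rpower.
    + lra.
    + apply minorant_A_branch; lra.
  - apply (triple_Rpower_sum_ge_1_of_minorant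
             (-846/10000) (6751/10000) (2130/10000) (1952/10000) t ht hp).
    + exact minorant_B_le_Rpower.
    + lra.
    + apply minorant_B_branch; lra.
Qed.

End TripleRelation.

Lemma Rpower_p_crit_sum_ge_1 (x y z : R) :
  0 < x < 1 -> 0 < y < 1 -> 0 < z < 1 -> x ^ 2 + y ^ 2 + z ^ 2 + 2 * x * y * z = 1 ->
  1 <= Rpower x p_crit + Rpower y p_crit + Rpower z p_crit.
Proof.
  intros hx hy hz hxyz.
  destruct (Rle_dec y (29/100)) as [hy'|hy'], (Rle_dec z (29/100)) as [hz'|hz'].
  - exact (triple_Rpower_sum_ge_1_of_two_small x y z hx hy hz hxyz hy' hz').
  - destruct (Rle_dec x (29/100)) as [hx'|hx'].
    + pose proof (triple_Rpower_sum_ge_1_of_two_small z x y hz hx hy ltac:(lra) hx' hy').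
      lra.
    + apply triple_Rpower_sum_ge_1_of_large_sum; try assumption.
      pose proof (triple_sum_ge_of_two_large x z y hx hy ltac:(lra) ltac:(lra) ltac:(lra)).
      lra.
  - destruct (Rle_dec x (29/100)) as [hx'|hx'].
    + pose proof (triple_Rpower_sum_ge_1_of_two_small y x z hy hx hz ltac:(lra) hx' hz').
      lra.
    + apply triple_Rpower_sum_ge_1_of_large_sum; try assumption.
      apply triple_sum_ge_of_two_large; lra.
  - apply triple_Rpower_sum_ge_1_of_large_sum; try assumption.
    pose proof (triple_sum_ge_of_two_large y z x hy hx ltac:(lra) ltac:(lra) ltac:(lra)).
    lra.
Qed.

Lemma sin_acute_bounds (e : R) : 0 < e < PI / 2 -> 0 < sin e < 1.
Proof.
  intros he; pose proof PI_RGT_0.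
  assert (0 < sin e) by (apply sin_gt_0; lra).
  assert (0 < cos e) by (apply cos_gt_0; lra).
  pose proof (sin2_cos2 e); unfold Rsqr in *.
  split; nra.
Qed.

Lemma sin_complementary_relation (a b c : R) : a + b + c = PI / 2 ->
  sin a ^ 2 + sin b ^ 2 + sin c ^ 2 + 2 * sin a * sin b * sin c = 1.
Proof.
  intros habc.
  replace c with (PI / 2 - (a + b)) by lra.
  rewrite sin_shift, cos_plus.
  pose proof (sin2_cos2 a); pose proof (sin2_cos2 b); unfold Rsqr in *.
  nra.
Qed.

Theorem lemma2p9 (p e1 e2 e3 : R)
  (hp1 : 1 <= p) (hp2 : p <= ln 3 / ln 2)
  (he1 : 0 < e1 < PI / 2) (he2 : 0 < e2 < PI / 2) (he3 : 0 < e3 < PI / 2)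
  (hsum : e1 + e2 + e3 = PI / 2) :
  Rpower (sin e1) p + Rpower (sin e2) p + Rpower (sin e3) p >= 1.
Proof.
  pose proof (sin_acute_bounds e1 he1) as h1.
  pose proof (sin_acute_bounds e2 he2) as h2.
  pose proof (sin_acute_bounds e3 he3) as h3.
  pose proof (Rpower_p_crit_sum_ge_1 _ _ _ h1 h2 h3 (sin_complementary_relation e1 e2 e3 hsum)).
  pose proof (Rle_Rpower_base_lt_1 _ p p_crit h1 hp2).
  pose proof (Rle_Rpower_base_lt_1 _ p p_crit h2 hp2).
  pose proof (Rle_Rpower_base_lt_1 _ p p_crit h3 hp2).
  lra.
Qed.
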